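(* Let $a$ and $b$ be Laurent polynomials with symmetry and let $r:=\gcd(a,b)$. Then there exist Laurent polynomials $u$ and $v$ with symmetry such that $$a(z)u(z)+b(z)v(z)=r(z).$$ Moreover, $\mathrm{S}a(z)\,\mathrm{S}u(z)=\mathrm{S}b(z)\,\mathrm{S}v(z)=\mathrm{S}r(z)$ and $\gcd(u,v)=1$.
   Context: Laurent polynomials $u(z)=\sum_ku(k)z^k$ with finitely many nonzero complex coefficients; gcd is taken in the ring of Laurent polynomials (up to nonzero scalar monomial multiples). $u$ has symmetry of type $\epsilon z^c$ ($\epsilon\in\{\pm1\},c\in\mathbb Z$) if $u(z)=\epsilon z^cu(z^{-1})$; for nonzero $u$, $\mathrm{S}u(z):=u(z)/u(z^{-1})$; the zero polynomial has symmetry of every type. *)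

(* Laurent polynomials are represented by pairs
   (p, n) with p : {poly R[i]}, n : int, standing for z^n p(z); their values
   live in the field of rational functions {fraction {poly R[i]}}, which
   contains the ring of Laurent polynomials.  Ring operations and equality of
   Laurent polynomials (and of the rational functions S u) are those of this
   field. *)
From HB Require Import structures.
From mathcomp Require Import all_boot all_algebra fraction.
From mathcomp Require Import reals.
From mathcomp.real_closed Require Import complex.

Set Implicit Arguments.
Unset Strict Implicit.
Unset Printing Implicit Defensive.

Import GRing.Theory Num.Theory.
Local Open Scope ring_scope.

Notation tofrac := (@FracField.tofrac _).

Definition ratfun (R : realType) := {fraction {poly R[i]}}.

Definition zvar (R : realType) : ratfun R := tofrac ('X : {poly R[i]}).

Record laurent (R : realType) := Laurent { lpoly : {poly R[i]}; lshift : int }.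

Definition lval (R : realType) (u : laurent R) : ratfun R :=
  tofrac (lpoly u) * zvar R ^ lshift u.

Definition lval_inv (R : realType) (u : laurent R) : ratfun R :=
  \sum_(i < size (lpoly u))
     tofrac ((lpoly u)`_i)%:P * zvar R ^ (- (i%:Z + lshift u)).

Definition lone (R : realType) : laurent R := Laurent 1 0.

Definition lsym_type (R : realType) (u : laurent R) (eps : R[i]) (c : int) :=
  lval u = tofrac eps%:P * zvar R ^ c * lval_inv u.

Definition lsym (R : realType) (u : laurent R) :=
  exists (eps : R[i]) (c : int), (eps = 1 \/ eps = -1) /\ lsym_type u eps c.

(* S u (z) = u(z) / u(z^{-1}) (only meaningful for nonzero u) *)
Definition Sym (R : realType) (u : laurent R) : ratfun R :=
  lval u / lval_inv u.

Definition ldvd (R : realType) (d a : laurent R) :=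
  exists q : laurent R, lval d * lval q = lval a.

(* r is a gcd of a and b in the ring of Laurent polynomials
   (gcd is defined up to unit = nonzero scalar monomial multiples) *)
Definition is_lgcd (R : realType) (r a b : laurent R) :=
  [/\ ldvd r a, ldvd r b & forall d, ldvd d a -> ldvd d b -> ldvd d r].

From Pilot Require Import Defs.
From HB Require Import structures.
From mathcomp Require Import all_boot all_order all_algebra fraction.
From mathcomp Require Import reals.
From mathcomp.real_closed Require Import complex.
From mathcomp Require Import ring zify.

(* Write u* for u(z^-1); u has symmetry of type e z^c (e = 1 or -1) iff
   u = e z^c u*, and these types multiply.  If a and b are symmetric, then r*
   divides a* and b*, which are associates of a and b, so r* divides r; hence
   r = s r* with s a unit, i.e. a scalar monomial, and r is symmetric.  Take any
   Bezout identity a u0 + b v0 = r and average u0 with e z^c u0*, where e z^c is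
   the type of r/a (and likewise v0): since the identity is invariant under
   u |-> e z^c u*, the averages u, v still satisfy it and are now symmetric.  To
   make them nonzero, replace them by u + n (b/r) t and v - n (a/r) t for a
   nonzero t of the appropriate type and a suitable n in {0, 1, 2}.  The types
   then give Sa Su = Sr = Sb Sv, and dividing a u + b v = r by r exhibits
   gcd(u, v) = 1. *)

Set Implicit Arguments.
Unset Strict Implicit.
Unset Printing Implicit Defensive.

Import Order.TTheory GRing.Theory Num.Theory.
Local Open Scope ring_scope.

Lemma exists_nonroot2 (F : fieldType) (f : nat -> F) (x y w1 w2 : F) :
  injective f -> w1 != 0 -> w2 != 0 ->
  exists n, x + f n * w1 != 0 /\ y + f n * w2 != 0.
Proof.
move=> f_inj w1_0 w2_0; pose s := map f (iota 0 3).
have s_uniq : uniq s by rewrite map_inj_uniq ?iota_uniq.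
have count_root (x0 w : F) : w != 0 -> (count (fun l : F => (x0 + l * w == 0)%R) s <= 1)%N.
  move=> w0; have lin_inj : injective (fun l : F => x0 + l * w) by move=> ? ? /addrI /(mulIf w0).
  by rewrite -(count_map _ (pred1 0)) count_uniq_mem ?leq_b1 ?map_inj_uniq.
pose root1 l := x + l * w1 == 0; pose root2 l := y + l * w2 == 0.
have : has (predC (predU root1 root2)) s.
  have := count_predUI root1 root2 s; have := count_predC (predU root1 root2) s.
  have : (count root1 s <= 1)%N := count_root x w1 w1_0.
  have : (count root2 s <= 1)%N := count_root y w2 w2_0.
  rewrite has_count size_map size_iota; lia.
by case/hasP => _ /mapP[n _ ->] /norP[]; exists n.
Qed.

Section LaurentPolynomials.

Variable R : realType.
Implicit Types (a b r u v w x y : laurent R) (e f l s : R[i]) (c d k : int).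

Local Notation z := (zvar R).
Local Notation lshift := Defs.lshift.
Local Notation "c %:K" := (tofrac c%:P : ratfun R) (at level 2, format "c %:K").

Lemma zvar_neq0 : z != 0.
Proof. by rewrite tofrac_eq0 polyX_eq0. Qed.

Lemma zvarz_neq0 k : z ^ k != 0.
Proof. by rewrite expfz_neq0 // zvar_neq0. Qed.

Lemma zvarzD k1 k2 : z ^ (k1 + k2) = z ^ k1 * z ^ k2.
Proof. by rewrite expfzDr // zvar_neq0. Qed.

Lemma zvarzN k : z ^ (- k) = (z ^ k)^-1.
Proof. by rewrite invr_expz. Qed.

Lemma tofrac_polyXn (n : nat) : tofrac ('X^n : {poly R[i]}) = z ^ n%:Z.
Proof. by rewrite rmorphXn. Qed.

Definition horner_zinv (p : {poly R[i]}) : ratfun R :=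
  (map_poly (@FracField.tofrac {poly R[i]} \o polyC) p).[z^-1].

Lemma horner_zinvM (p q : {poly R[i]}) : horner_zinv (p * q) = horner_zinv p * horner_zinv q.
Proof. by rewrite /horner_zinv rmorphM hornerM. Qed.

Lemma horner_zinvD (p q : {poly R[i]}) : horner_zinv (p + q) = horner_zinv p + horner_zinv q.
Proof. by rewrite /horner_zinv rmorphD hornerD. Qed.

Lemma horner_zinvZ l p : horner_zinv (l *: p) = l%:K * horner_zinv p.
Proof. by rewrite -mul_polyC horner_zinvM /horner_zinv map_polyC hornerC. Qed.

Lemma horner_zinvXn (n : nat) : horner_zinv 'X^n = z ^ (- n%:Z).
Proof. by rewrite /horner_zinv rmorphXn /= map_polyX hornerXn exprVn exprnN. Qed.

Lemma horner_zinv_poly (n : nat) (f : nat -> R[i]) :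
  horner_zinv (\poly_(i < n) f i) = \sum_(i < n) (f i)%:K * z ^ (- i%:Z).
Proof.
rewrite poly_def /horner_zinv rmorph_sum horner_sum; apply: eq_bigr => i _.
by rewrite -/(horner_zinv _) horner_zinvZ horner_zinvXn.
Qed.

Lemma tofrac_poly (n : nat) (f : nat -> R[i]) :
  tofrac (\poly_(i < n) f i) = \sum_(i < n) (f i)%:K * z ^ i%:Z.
Proof.
rewrite poly_def rmorph_sum; apply: eq_bigr => i _.
by rewrite -mul_polyC rmorphM rmorphXn.
Qed.

Lemma lval_invE u : lval_inv u = horner_zinv (lpoly u) * z ^ (- lshift u).
Proof.
rewrite /lval_inv -[in RHS](coefK (lpoly u)) horner_zinv_poly mulr_suml.
by apply: eq_bigr => i _; rewrite -mulrA -zvarzD opprD.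
Qed.

Definition revp (p : {poly R[i]}) : {poly R[i]} :=
  \poly_(i < size p) p`_((size p).-1 - i).

Lemma tofrac_revp p : tofrac (revp p) = horner_zinv p * z ^ (size p).-1%:Z.
Proof.
rewrite tofrac_poly -[in RHS](coefK p) horner_zinv_poly mulr_suml.
rewrite (reindex_inj rev_ord_inj); apply: eq_bigr => -[i /= lt_i_p] _.
have -> : ((size p).-1 - (size p - i.+1) = i)%N by move: lt_i_p; case: (size p) => // n; lia.
by rewrite coefK -mulrA -zvarzD; congr (_ * z ^ _); lia.
Qed.

Lemma horner_zinv_revp p : horner_zinv (revp p) = tofrac p * z ^ (- (size p).-1%:Z).
Proof.
rewrite horner_zinv_poly -[in RHS](coefK p) tofrac_poly mulr_suml.
rewrite (reindex_inj rev_ord_inj); apply: eq_bigr => -[i /= lt_i_p] _.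
have -> : ((size p).-1 - (size p - i.+1) = i)%N by move: lt_i_p; case: (size p) => // n; lia.
by rewrite coefK -mulrA -zvarzD; congr (_ * z ^ _); lia.
Qed.

Definition lmul u v := Laurent (lpoly u * lpoly v) (lshift u + lshift v).
Definition lscale l u := Laurent (l *: lpoly u) (lshift u).
Definition lmon k : laurent R := Laurent 1 k.
Definition lrev u := Laurent (revp (lpoly u)) (- lshift u - (size (lpoly u)).-1%:Z).

(* the polynomial part of [u] when its shift is lowered to [m <= lshift u] *)
Definition lpad u m := lpoly u * 'X^(absz (lshift u - m)).
Definition ladd u v :=
  let m := Num.min (lshift u) (lshift v) in Laurent (lpad u m + lpad v m) m.

Lemma lval_lmul u v : lval (lmul u v) = lval u * lval v.
Proof. by rewrite /lval /= tofracM zvarzD mulrACA. Qed.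

Lemma lval_inv_lmul u v : lval_inv (lmul u v) = lval_inv u * lval_inv v.
Proof. by rewrite !lval_invE /= horner_zinvM opprD zvarzD mulrACA. Qed.

Lemma lval_lscale l u : lval (lscale l u) = l%:K * lval u.
Proof. by rewrite /lval /= -mul_polyC tofracM mulrA. Qed.

Lemma lval_inv_lscale l u : lval_inv (lscale l u) = l%:K * lval_inv u.
Proof. by rewrite !lval_invE /= horner_zinvZ mulrA. Qed.

Lemma lval_lmon k : lval (lmon k) = z ^ k.
Proof. by rewrite /lval /= tofrac1 mul1r. Qed.

Lemma lval_inv_lmon k : lval_inv (lmon k) = z ^ (- k).
Proof. by rewrite lval_invE /= -(expr0 'X) horner_zinvXn mul1r. Qed.

Lemma lval_lrev u : lval (lrev u) = lval_inv u.
Proof. by rewrite /lval lval_invE /= tofrac_revp -mulrA -zvarzD addrC subrK. Qed.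

Lemma lval_inv_lrev u : lval_inv (lrev u) = lval u.
Proof. by rewrite lval_invE /= horner_zinv_revp -mulrA -zvarzD opprB opprK addKr. Qed.

Lemma lval_lpad u m : m <= lshift u -> tofrac (lpad u m) * z ^ m = lval u.
Proof. by move=> le_m; rewrite tofracM tofrac_polyXn gez0_abs ?subr_ge0 // -mulrA -zvarzD subrK. Qed.

Lemma lval_inv_lpad u m : m <= lshift u ->
  horner_zinv (lpad u m) * z ^ (- m) = lval_inv u.
Proof.
move=> le_m; rewrite lval_invE horner_zinvM horner_zinvXn gez0_abs ?subr_ge0 //.
by rewrite -mulrA -zvarzD; congr (_ * z ^ _); lia.
Qed.

Lemma lval_ladd u v : lval (ladd u v) = lval u + lval v.
Proof. by rewrite {1}/lval /= tofracD mulrDl !lval_lpad ?ge_min ?lexx ?orbT. Qed.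

Lemma lval_inv_ladd u v : lval_inv (ladd u v) = lval_inv u + lval_inv v.
Proof. by rewrite lval_invE /= horner_zinvD mulrDl !lval_inv_lpad ?ge_min ?lexx ?orbT. Qed.

Lemma lval_inv_eq u v : lval u = lval v -> lval_inv u = lval_inv v.
Proof.
pose m := Num.min (lshift u) (lshift v).
have [le_mu le_mv] : m <= lshift u /\ m <= lshift v by rewrite !ge_min !lexx orbT.
rewrite -(lval_lpad le_mu) -(lval_lpad le_mv) -(lval_inv_lpad le_mu) -(lval_inv_lpad le_mv).
by move=> /(mulIf (zvarz_neq0 _)) /eqP; rewrite tofrac_eq => /eqP ->.
Qed.

Lemma zvarzNr k : z ^ k * z ^ (- k) = 1.
Proof. by rewrite -zvarzD subrr expr0z. Qed.

Lemma sqr_constK e : e ^+ 2 = 1 -> e%:K ^+ 2 = 1.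
Proof. by move=> e2; rewrite -!rmorphXn /= e2 rmorph1. Qed.

Lemma lsym_typeM u v e f c d :
  lsym_type u e c -> lsym_type v f d -> lsym_type (lmul u v) (e * f) (c + d).
Proof.
rewrite /lsym_type lval_lmul lval_inv_lmul => -> ->.
by rewrite polyCM tofracM zvarzD; ring.
Qed.

Lemma lsym_typeD u v e c :
  lsym_type u e c -> lsym_type v e c -> lsym_type (ladd u v) e c.
Proof. by rewrite /lsym_type lval_ladd lval_inv_ladd mulrDr => -> ->. Qed.

Lemma lsym_typeZ l u e c : lsym_type u e c -> lsym_type (lscale l u) e c.
Proof. by rewrite /lsym_type lval_lscale lval_inv_lscale => ->; rewrite mulrCA. Qed.

Lemma lsym_type_lmon k : lsym_type (lmon k) 1 (k + k).
Proof. by rewrite /lsym_type lval_lmon lval_inv_lmon tofrac1 mul1r -zvarzD addrK. Qed.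

Lemma lsym_typeV u e c : e ^+ 2 = 1 ->
  lsym_type u e c -> lval_inv u = e%:K * z ^ (- c) * lval u.
Proof.
move=> /sqr_constK e2 ->; have zc := zvarzNr c.
by ring: e2 zc.
Qed.

Lemma lsym_type_quot r x y e f c d : e ^+ 2 = 1 -> lval r != 0 ->
  lsym_type r e c -> lsym_type y f d -> lval r * lval x = lval y ->
  lsym_type x (e * f) (d - c).
Proof.
move=> e2 r0 Hr Hy rx.
have rxV : lval_inv r * lval_inv x = lval_inv y.
  by rewrite -lval_inv_lmul; apply: lval_inv_eq; rewrite lval_lmul.
apply: (mulfI r0); rewrite rx Hy -rxV {1}Hr polyCM tofracM zvarzD.
move/sqr_constK: e2 => e2; have zc := zvarzNr c.
by ring: e2 zc.
Qed.

Lemma Sym_lsym_type u e c : lsym_type u e c -> lval u != 0 -> Sym u = e%:K * z ^ c.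
Proof.
move=> Hu u0; have uV0 : lval_inv u != 0 by apply: contraNneq u0; rewrite Hu => ->; rewrite mulr0.
by rewrite /Sym {1}Hu mulfK.
Qed.

Definition lsymmetrize e c u := ladd u (lscale e (lmul (lmon c) (lrev u))).

Lemma lval_lsymmetrize e c u : lval (lsymmetrize e c u) = lval u + e%:K * z ^ c * lval_inv u.
Proof. by rewrite lval_ladd lval_lscale lval_lmul lval_lmon lval_lrev mulrA. Qed.

Lemma lsym_type_lsymmetrize e c u : e ^+ 2 = 1 -> lsym_type (lsymmetrize e c u) e c.
Proof.
move=> /sqr_constK e2; rewrite /lsym_type lval_lsymmetrize.
rewrite lval_inv_ladd lval_inv_lscale lval_inv_lmul lval_inv_lmon lval_inv_lrev.
have zc := zvarzNr c.
by ring: e2 zc.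
Qed.

Lemma lval_lsymmetrize_sym e c u :
  lsym_type u e c -> lval (lsymmetrize e c u) = lval u *+ 2.
Proof. by move=> Hu; rewrite lval_lsymmetrize -Hu mulr2n. Qed.

Lemma lval_lsymmetrize_lmul s k u w e c : e ^+ 2 = 1 -> lsym_type u e c ->
  lval (lsymmetrize s k (lmul u w)) = lval u * lval (lsymmetrize (s * e) (k - c) w).
Proof.
move=> e2 Hu; rewrite !lval_lsymmetrize lval_lmul lval_inv_lmul (lsym_typeV e2 Hu).
move/sqr_constK: e2 => e2; have zc := zvarzNr c.
by rewrite polyCM tofracM zvarzD; ring: e2 zc.
Qed.

Lemma lval_lsymmetrize_ladd e c u v :
  lval (lsymmetrize e c (ladd u v)) = lval (lsymmetrize e c u) + lval (lsymmetrize e c v).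
Proof. by rewrite !lval_lsymmetrize lval_ladd lval_inv_ladd; ring. Qed.

Lemma lval_lsymmetrize_eq e c u v :
  lval u = lval v -> lval (lsymmetrize e c u) = lval (lsymmetrize e c v).
Proof. by move=> uv; rewrite !lval_lsymmetrize uv (lval_inv_eq uv). Qed.

Lemma constK_inj : injective (fun l : R[i] => l%:K).
Proof. by move=> l1 l2 /eqP; rewrite tofrac_eq => /eqP /polyC_inj. Qed.

Lemma lval_lone : lval (lone R) = 1.
Proof. by rewrite /lval /= tofrac1 expr0z mulr1. Qed.

Lemma ldvd_neq0 r u : ldvd r u -> lval u != 0 -> lval r != 0.
Proof. by move=> [q <-]; apply: contra_neq => ->; rewrite mul0r. Qed.

Lemma ldvd_lrev r u e c : lsym_type u e c -> ldvd r u -> ldvd (lrev r) u.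
Proof.
move=> Hu [q rq]; have rqV : lval_inv r * lval_inv q = lval_inv u.
  by rewrite -lval_inv_lmul; apply: lval_inv_eq; rewrite lval_lmul.
exists (lscale e (lmul (lmon c) (lrev q))).
by rewrite Hu -rqV lval_lscale lval_lmul lval_lmon !lval_lrev; ring.
Qed.

Lemma dvdp_Xn_scale (p : {poly R[i]}) (j : nat) :
  p %| 'X^j -> exists l (k : nat), p = l *: 'X^k.
Proof.
move=> pj; have /dvdp_exp_XsubCP[k _ /eqpf_eq[l _ ->]] : p %| ('X - 0%:P) ^+ j.
  by rewrite polyC0 subr0.
by exists l, k; rewrite polyC0 subr0.
Qed.

Lemma lunit_monomial x y : lval x * lval y = 1 -> exists l k, lval x = l%:K * z ^ k.
Proof.
rewrite /lval mulrACA -tofracM -zvarzD; set m := _ + _ => xy1.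
have [j /dvdp_Xn_scale[l [k ->]]] : exists j, lpoly x %| 'X^j.
  have [m_ge0 | m_lt0] := lerP 0 m.
    exists 0%N; apply/dvdpP; exists (lpoly y * 'X^(absz m)).
    apply/eqP; rewrite expr0 -tofrac_eq tofrac1 !tofracM tofrac_polyXn gez0_abs //.
    by rewrite -xy1 tofracM; apply/eqP; ring.
  exists (absz m); apply/dvdpP; exists (lpoly y).
  apply/eqP; rewrite -tofrac_eq tofrac_polyXn ltz0_abs // zvarzN -[(z ^ m)^-1]mul1r -xy1.
  by rewrite mulfK ?zvarz_neq0 // [lpoly y * _]mulrC.
by exists l, (k%:Z + lshift x); rewrite -mul_polyC tofracM tofrac_polyXn zvarzD mulrA.
Qed.

Lemma lgcd_lsym_type a b r ea eb ca cb :
  lsym_type a ea ca -> lsym_type b eb cb -> lval a != 0 -> is_lgcd r a b ->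
  exists e c, e ^+ 2 = 1 /\ lsym_type r e c.
Proof.
move=> Ha Hb a0 [ra rb gcd_r]; have r0 := ldvd_neq0 ra a0.
have [s rVs] := gcd_r _ (ldvd_lrev Ha ra) (ldvd_lrev Hb rb).
have rsV : lval r * lval_inv s = lval_inv r.
  by rewrite -(lval_inv_lrev r) -lval_inv_lmul; apply: lval_inv_eq; rewrite lval_lmul.
have ssV : lval s * lval (lrev s) = 1.
  by apply: (mulfI r0); rewrite lval_lrev mulr1 -[in RHS]rVs lval_lrev -rsV; ring.
have [e [k se]] := lunit_monomial ssV.
have sV : lval_inv s = e%:K * z ^ (- k).
  by rewrite (@lval_inv_eq s (lscale e (lmon k))) ?lval_inv_lscale ?lval_inv_lmon ?lval_lscale ?lval_lmon.
exists e, k; split.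
  apply: constK_inj; rewrite /= rmorphXn /= rmorph1 -ssV lval_lrev se sV.
  by have zk := zvarzNr k; ring: zk.
by rewrite /lsym_type -{1}rVs lval_lrev se mulrC.
Qed.

Lemma lgcd_bezout r a b : is_lgcd r a b ->
  exists u v, lval a * lval u + lval b * lval v = lval r.
Proof.
move=> [_ _ gcd_r]; have [[p q] /= bez] := Bezoutp (lpoly a) (lpoly b).
have ldvd_poly (g : {poly R[i]}) w : g %| lpoly w -> ldvd (Laurent g 0) w.
  move=> /dvdpP[h wh]; exists (Laurent h (lshift w)).
  by rewrite /lval /= wh tofracM expr0z mulr1 mulrA [tofrac h * _]mulrC.
have [t gt] : ldvd (Laurent (p * lpoly a + q * lpoly b) 0) r.
  by apply: gcd_r; apply: ldvd_poly; rewrite (eqp_dvdl _ bez) ?dvdp_gcdl ?dvdp_gcdr.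
exists (lmul (Laurent p (- lshift a)) t), (lmul (Laurent q (- lshift b)) t).
rewrite -gt !lval_lmul /lval /= expr0z mulr1 tofracD !tofracM.
have za := zvarzNr (lshift a); have zb := zvarzNr (lshift b).
by ring: za zb.
Qed.

Lemma lcoprime_bezout u v x y :
  lval u * lval x + lval v * lval y = 1 -> is_lgcd (lone R) u v.
Proof.
move=> bez; split; [by exists u; rewrite lval_lone mul1r | by exists v; rewrite lval_lone mul1r |].
move=> d [p dp] [q dq]; exists (ladd (lmul p x) (lmul q y)).
by rewrite lval_lone lval_ladd !lval_lmul -bez -dp -dq; ring.
Qed.

Lemma sqr_sign e : e = 1 \/ e = -1 -> e ^+ 2 = 1.
Proof. by case=> ->; rewrite ?sqrrN expr1n. Qed.

Lemma sqr_signM e f : e ^+ 2 = 1 -> f ^+ 2 = 1 -> (e * f) ^+ 2 = 1.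
Proof. by move=> e2 f2; rewrite exprMn e2 f2 mulr1. Qed.

Lemma lsym_bezout_symmetrize a b r u0 v0 ea eb er ca cb cr :
  ea ^+ 2 = 1 -> eb ^+ 2 = 1 -> er ^+ 2 = 1 ->
  lsym_type a ea ca -> lsym_type b eb cb -> lsym_type r er cr ->
  lval a * lval u0 + lval b * lval v0 = lval r ->
  exists u v, [/\ lsym_type u (er * ea) (cr - ca), lsym_type v (er * eb) (cr - cb)
    & lval a * lval u + lval b * lval v = lval r].
Proof.
move=> ea2 eb2 er2 Ha Hb Hr bez0.
exists (lscale 2^-1 (lsymmetrize (er * ea) (cr - ca) u0)).
exists (lscale 2^-1 (lsymmetrize (er * eb) (cr - cb) v0)).
split; try exact/lsym_typeZ/lsym_type_lsymmetrize/sqr_signM.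
have bez0' : lval (ladd (lmul a u0) (lmul b v0)) = lval r by rewrite lval_ladd !lval_lmul.
rewrite !lval_lscale mulrCA [lval b * _]mulrCA -mulrDr.
rewrite -(lval_lsymmetrize_lmul _ _ _ ea2 Ha) -(lval_lsymmetrize_lmul _ _ _ eb2 Hb).
rewrite -lval_lsymmetrize_ladd (lval_lsymmetrize_eq _ _ bez0') (lval_lsymmetrize_sym Hr).
have two : 2%:R = (2%:R : R[i])%:K by rewrite !rmorph_nat.
rewrite -[lval r *+ 2]mulr_natl mulrA two -tofracM -polyCM mulVf ?pnatr_eq0 //.
by rewrite tofrac1 mul1r.
Qed.

(* [t = z^k a b] is chosen with the type of [r^2 / (a b)], so that [(b/r) t] has
   the type of [u] and [(a/r) t] that of [v]. *)
Lemma lsym_bezout_nonzero a b r u v ea eb er ca cb cr :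
  ea ^+ 2 = 1 -> eb ^+ 2 = 1 -> er ^+ 2 = 1 ->
  lsym_type a ea ca -> lsym_type b eb cb -> lsym_type r er cr ->
  lval a != 0 -> lval b != 0 -> ldvd r a -> ldvd r b ->
  lsym_type u (er * ea) (cr - ca) -> lsym_type v (er * eb) (cr - cb) ->
  lval a * lval u + lval b * lval v = lval r ->
  exists u' v', [/\ lsym_type u' (er * ea) (cr - ca), lsym_type v' (er * eb) (cr - cb),
    lval u' != 0, lval v' != 0 & lval a * lval u' + lval b * lval v' = lval r].
Proof.
move=> ea2 eb2 er2 Ha Hb Hr a0 b0 ra rb Hu Hv bez.
have r0 := ldvd_neq0 ra a0; have [aq raq] := ra; have [bq rbq] := rb.
have aq0 : lval aq != 0 by apply: contraNneq a0; rewrite -raq => ->; rewrite mulr0.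
have bq0 : lval bq != 0 by apply: contraNneq b0; rewrite -rbq => ->; rewrite mulr0.
pose k := cr - ca - cb; pose t := lmul (lmon k) (lmul a b).
have Ht := lsym_typeM (lsym_type_lmon k) (lsym_typeM Ha Hb).
have t0 : lval t != 0.
  by rewrite !lval_lmul lval_lmon (mulf_neq0 (zvarz_neq0 _) (mulf_neq0 a0 b0)).
have natK_inj : injective (fun n : nat => (n%:R : R[i])%:K).
  by move=> m n /constK_inj /eqP; rewrite eqr_nat => /eqP.
have aqt0 : - (lval aq * lval t) != 0 by rewrite oppr_eq0 (mulf_neq0 aq0 t0).
have [n [u1_0 v1_0]] := exists_nonroot2 (lval u) (lval v) natK_inj (mulf_neq0 bq0 t0) aqt0.
exists (ladd u (lscale n%:R (lmul bq t))), (ladd v (lscale (- n%:R) (lmul aq t))).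
rewrite !lval_ladd !lval_lscale (lval_lmul bq t) (lval_lmul aq t) polyCN tofracN mulNr -mulrN.
split; [| | exact: u1_0 | exact: v1_0 |].
- apply: lsym_typeD Hu _; apply: lsym_typeZ.
  have -> : er * ea = er * eb * (1 * (ea * eb)) by ring: eb2.
  have -> : cr - ca = cb - cr + (k + k + (ca + cb)) by rewrite /k; ring.
  exact: lsym_typeM (lsym_type_quot er2 r0 Hr Hb rbq) Ht.
- apply: lsym_typeD Hv _; apply: lsym_typeZ.
  have -> : er * eb = er * ea * (1 * (ea * eb)) by ring: ea2.
  have -> : cr - cb = ca - cr + (k + k + (ca + cb)) by rewrite /k; ring.
  exact: lsym_typeM (lsym_type_quot er2 r0 Hr Ha raq) Ht.
- by rewrite -bez -raq -rbq; ring.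
Qed.

Lemma Sym_lsym_type_quot a u r e f c d : e ^+ 2 = 1 ->
  lsym_type a e c -> lsym_type u (f * e) (d - c) -> lsym_type r f d ->
  lval a != 0 -> lval u != 0 -> lval r != 0 -> Sym a * Sym u = Sym r.
Proof.
move=> /sqr_constK e2 Ha Hu Hr a0 u0 r0.
rewrite (Sym_lsym_type Ha a0) (Sym_lsym_type Hu u0) (Sym_lsym_type Hr r0).
rewrite polyCM tofracM zvarzD; have zc := zvarzNr c.
by ring: e2 zc.
Qed.

Lemma lsym_of_type u e c : e ^+ 2 = 1 -> lsym_type u e c -> lsym u.
Proof.
move=> /eqP; rewrite sqrf_eq1 => e_sign Hu; exists e, c; split => //.
by case/orP: e_sign => /eqP; [left | right].
Qed.

End LaurentPolynomials.

Theorem theorem3p11 (R : realType) (a b r : laurent R) :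
  lval a != 0 -> lval b != 0 ->
  lsym a -> lsym b ->
  is_lgcd r a b ->
  exists u v : laurent R,
    lsym u /\ lsym v /\ lval u != 0 /\ lval v != 0 /\
    lval a * lval u + lval b * lval v = lval r /\
    Sym a * Sym u = Sym r /\ Sym b * Sym v = Sym r /\
    is_lgcd (lone R) u v.
Proof.
move=> a0 b0 [ea [ca [/sqr_sign ea2 Ha]]] [eb [cb [/sqr_sign eb2 Hb]]] gcd_r.
have [er [cr [er2 Hr]]] := lgcd_lsym_type Ha Hb a0 gcd_r.
have [ra rb _] := gcd_r; have r0 := ldvd_neq0 ra a0.
have [u0 [v0 bez0]] := lgcd_bezout gcd_r.
have [u1 [v1 [Hu1 Hv1 bez1]]] := lsym_bezout_symmetrize ea2 eb2 er2 Ha Hb Hr bez0.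
have [u [v [Hu Hv u_neq0 v_neq0 bez]]] :=
  lsym_bezout_nonzero ea2 eb2 er2 Ha Hb Hr a0 b0 ra rb Hu1 Hv1 bez1.
exists u, v; split; first exact: lsym_of_type (sqr_signM er2 ea2) Hu.
split; first exact: lsym_of_type (sqr_signM er2 eb2) Hv.
do 3 (split; first by []).
split; first exact: Sym_lsym_type_quot ea2 Ha Hu Hr a0 u_neq0 r0.
split; first exact: Sym_lsym_type_quot eb2 Hb Hv Hr b0 v_neq0 r0.
have [[aq raq] [bq rbq]] := (ra, rb).
apply: (@lcoprime_bezout _ u v aq bq); apply: (mulfI r0).
by rewrite mulr1 -[in RHS]bez -raq -rbq; ring.
Qed.
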